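(* Let $G$ be a group and $a\in G$. The following are equivalent: (1) $a$ has infinite order; (2) there exist disjoint subsets $E_1,E_2$ of $G$ such that $aE_1\subseteq E_1$ and $aE_2\cap E_1\neq\emptyset$.
   Context: Here $aE=\{ax:x\in E\}$ denotes left translation in $G$. *)

From HB Require Import structures.
Set Implicit Arguments. Unset Strict Implicit.
From mathcomp Require Import all_boot monoid.
From mathcomp Require Import classical_sets.
Definition ltrans {G : groupType} (a : G) (E : set G) : set G :=
  [set (a * x)%g | x in E].
Definition infinite_order {G : groupType} (a : G) : Prop :=
  forall n : nat, (0 < n)%N -> (a ^+ n)%g <> 1%g.

(* If a has infinite order, the positive powers of a and the singleton {1}
   are disjoint, the former is stable under left translation by a, and
   a = a * 1 lies in both a{1} and the positive powers.  Conversely, a set E1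
   with aE1 ⊆ E1 is stable under every a^k; if a^(m+1) = 1 and a y ∈ E1, then
   y = a^m (a y) ∈ E1, so no y ∈ E2 can satisfy a y ∈ E1. *)
From mathcomp Require Import all_boot monoid.
From mathcomp Require Import classical_sets.
Local Open Scope classical_set_scope.
Local Open Scope group_scope.

Section LeftTranslation.

Context {G : groupType} (a : G).

Definition pos_powers : set G := [set x | exists2 n, (0 < n)%N & x = a ^+ n].

Lemma ltrans_pos_powers : ltrans a pos_powers `<=` pos_powers.
Proof. by move=> _ [_ [n n_gt0 ->] <-]; exists n.+1; rewrite ?expgS. Qed.

Lemma infinite_order_pos_powersI1 :
  infinite_order a -> pos_powers `&` [set 1] = set0.
Proof. by move=> inf_a; apply/seteqP; split=> _ //= [[n n_gt0 ->]]; apply: inf_a. Qed.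

Lemma expg_ltrans_closed (E : set G) :
  ltrans a E `<=` E -> forall k x, E x -> E (a ^+ k * x).
Proof.
move=> aE_sub; elim=> [|k IHk] x Ex; first by rewrite expg0 mul1g.
by rewrite expgS -mulgA; apply: aE_sub; exists (a ^+ k * x) => //; apply: IHk.
Qed.

Lemma finite_order_ltrans_preimage {E : set G} {m : nat} {y : G} :
  a ^+ m.+1 = 1 -> ltrans a E `<=` E -> E (a * y) -> E y.
Proof.
move=> am1 aE_sub Eay.
by rewrite -[y]mul1g -am1 expgSr -mulgA; apply: expg_ltrans_closed.
Qed.

End LeftTranslation.

Theorem mainTheorem12 (G : groupType) (a : G) :
  infinite_order a <->
  exists E1 E2 : set G,
    E1 `&` E2 = set0 /\ ltrans a E1 `<=` E1 /\ ltrans a E2 `&` E1 !=set0.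
Proof.
split=> [inf_a | [E1 [E2 [E12_0 [aE1_sub [_ [[y E2y <-] E1ay]]]]]]].
- exists (pos_powers a), [set 1]; split; first exact: infinite_order_pos_powersI1.
  split; first exact: ltrans_pos_powers.
  by exists a; split; [exists 1; rewrite ?mulg1 | exists 1%N].
- case=> [//|m] _ am1.
  have E1y := finite_order_ltrans_preimage _ am1 aE1_sub E1ay.
  have : (E1 `&` E2) y by [].
  by rewrite E12_0.
Qed.
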